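(* Let $c_0>0$, $\tau_1>0$, $\alpha_2\ge 0$, and define the complex attenuation laws $$\alpha_*^{ksb}(\omega)=\frac{-i\omega}{c_0\sqrt{1-i\tau_1\omega}}+\alpha_2(-i\omega),\qquad \alpha_*^{tv}(\omega)=\frac{-i\omega}{c_0\sqrt{1-i\tau_1\omega}}-\frac{-i\omega}{c_0}\qquad(\omega\in\mathbb{R}).$$ Let $G^{ksb}$ and $G^{tv}$ be the Green functions associated with $\alpha_*^{ksb}$ and $\alpha_*^{tv}$ respectively (see context), and let $$T_1(\mathbf{x}):=\frac{|\mathbf{x}|}{c_1},\qquad \frac1{c_1}:=\frac1{c_0}+\alpha_2 .$$ Then $G^{tv}(\mathbf{x},t-T_1(\mathbf{x}))=G^{ksb}(\mathbf{x},t)$ for all $\mathbf{x}\in\mathbb{R}^3\setminus\{0\}$ and $t\in\mathbb{R}$ (as distributions in $t$).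
   Context: The square root is the principal branch. The time Fourier transform is $\hat f(\omega)=(2\pi)^{-1/2}\int_{\mathbb{R}} f(t)e^{i\omega t}\,dt$. For a complex attenuation law $\alpha_*$, the associated Green function $G(\mathbf{x},t)$ is the (distribution in $t$) whose time Fourier transform is $$\hat G(\mathbf{x},\omega)=\frac{1}{\sqrt{2\pi}}\,\frac{e^{i k(\omega)|\mathbf{x}|}}{4\pi|\mathbf{x}|},\qquad k(\omega)=i\,\alpha_*(\omega)+\frac{\omega}{c_0}.$$ This is the Green function of the dissipative wave equation $\Delta p-(D_*+\frac1{c_0}\partial_t)^2p=f$, where $D_*$ is the time-convolution operator with kernel $\mathcal{F}^{-1}\{\alpha_*\}$. *)

From HB Require Import structures.
From mathcomp Require Import all_boot all_order all_algebra.
From mathcomp Require Import all_classical all_reals all_analysis.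
From mathcomp Require Import complex.
Set Implicit Arguments. Unset Strict Implicit. Unset Printing Implicit Defensive.
Import Order.TTheory GRing.Theory Num.Theory.
Local Open Scope ring_scope.
Local Open Scope complex_scope.

Section Defs.
Variable R : realType.

Definition enorm3 (x : 'rV[R]_3) : R := Num.sqrt (\sum_(i < 3) x ord0 i ^+ 2).

Definition cmod (z : R[i]) : R := Num.sqrt (complex.Re z ^+ 2 + complex.Im z ^+ 2).

(* principal branch of the complex square root (Re >= 0; arg in (-pi/2, pi/2]) *)
Definition psqrt (z : R[i]) : R[i] :=
  Complex (Num.sqrt ((cmod z + complex.Re z) / 2))
          ((if complex.Im z < 0 then -1 else 1) * Num.sqrt ((cmod z - complex.Re z) / 2)).

Definition cexp (z : R[i]) : R[i] :=
  Complex (expR (complex.Re z) * cos (complex.Im z)) (expR (complex.Re z) * sin (complex.Im z)).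

Definition cint (f : R -> R[i]) : R[i] :=
  Complex (Rintegral (@lebesgue_measure R) setT (fun t => complex.Re (f t)))
          (Rintegral (@lebesgue_measure R) setT (fun t => complex.Im (f t))).

Definition smoothR (f : R -> R) : Prop :=
  forall (n : nat) (t : R), derivable (derive1n n f) t 1.

Definition test_fun (psi : R -> R[i]) : Prop :=
  smoothR (fun t => complex.Re (psi t)) /\ smoothR (fun t => complex.Im (psi t)) /\
  exists M : R, forall t : R, M < `|t| -> psi t = 0.

Definition distribution := (R -> R[i]) -> R[i].

(* translation: [translate T u] is the distribution t |-> u(t - T),
   i.e. <u(. - T), psi> = <u, psi(. + T)> *)
Definition translate (T : R) (u : distribution) : distribution :=
  fun psi => u (fun t => psi (t + T)).

Definition invFT (psi : R -> R[i]) (w : R) : R[i] :=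
  (Num.sqrt (2 * pi))^-1%:C * cint (fun t => psi t * cexp (- 'i * (w * t)%:C)).

Definition wavenum (alpha : R -> R[i]) (c0 : R) (w : R) : R[i] :=
  'i * alpha w + (w / c0)%:C.

Definition Ghat (alpha : R -> R[i]) (c0 : R) (x : 'rV[R]_3) (w : R) : R[i] :=
  (Num.sqrt (2 * pi))^-1%:C * cexp ('i * wavenum alpha c0 w * (enorm3 x)%:C)
    / (4 * pi * enorm3 x)%:C.

(* Green function G(x, .) as the distribution whose time Fourier transform
   (hat f(w) = (2 pi)^{-1/2} int f(t) e^{i w t} dt) is hat G(x, .):
   <G(x,.), psi> = int hat G(x,w) (J psi)(w) dw. *)
Definition green (alpha : R -> R[i]) (c0 : R) (x : 'rV[R]_3) : distribution :=
  fun psi => cint (fun w => Ghat alpha c0 x w * invFT psi w).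

Definition alpha_ksb (c0 tau1 alpha2 : R) (w : R) : R[i] :=
  (- 'i * w%:C) / (c0%:C * psqrt (1 - 'i * (tau1 * w)%:C))
  + alpha2%:C * (- 'i * w%:C).

Definition alpha_tv (c0 tau1 : R) (w : R) : R[i] :=
  (- 'i * w%:C) / (c0%:C * psqrt (1 - 'i * (tau1 * w)%:C))
  - (- 'i * w%:C) / c0%:C.

Definition c1 (c0 alpha2 : R) : R := (c0^-1 + alpha2)^-1.
Definition T1 (c0 alpha2 : R) (x : 'rV[R]_3) : R := enorm3 x / c1 c0 alpha2.

End Defs.

(** The delay [T1] only multiplies the Fourier symbol: the two attenuation
    laws differ by [-i w (1/c0 + alpha2) = -i w / c1], so
    [Ghat_ksb(x, w) = Ghat_tv(x, w) e^{i w T1(x)}].  On the test-function side,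
    translating [psi] by [T1] multiplies its inverse Fourier transform by the
    same factor [e^{i w T1}], by translation invariance of Lebesgue measure.
    Hence the two pairings have pointwise equal integrands in [w]. *)
From HB Require Import structures.
From mathcomp Require Import all_boot all_order all_algebra.
From mathcomp Require Import all_classical all_reals all_analysis.
From mathcomp Require Import complex measurable_realfun.
From mathcomp Require Import ring lra.
Import Order.TTheory GRing.Theory Num.Theory.
Import numFieldNormedType.Exports.
Local Open Scope ring_scope.
Local Open Scope classical_set_scope.

Section translation_invariance.
Context {R : realType}.
Implicit Types (T : R) (f : R -> R).

Lemma continuous_addr T : continuous (fun t : R => t + T).
Proof. by move=> t; apply: cvgD; [exact: cvg_id | exact: cvg_cst]. Qed.

Lemma measurable_fun_addr T :
  @measurable_fun _ _ (measurableTypeR R) (measurableTypeR R) setT (fun t => t + T).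
Proof.
move=> _ Y mY; rewrite setTI.
by have := continuous_measurable_fun (continuous_addr T) measurableT mY; rewrite setTI.
Qed.

Lemma lebesgue_measure_addr T (A : set R) : measurable A ->
  lebesgue_measure ((fun t => t + T) @^-1` A) = lebesgue_measure A.
Proof.
move=> mA.
(* The measure structure of a pushforward needs [measurable_fun_addr],
   supplied after [Unshelve]. *)
refine (let mu : {measure set (measurableTypeR R) -> \bar R} :=
  @pushforward _ _ (measurableTypeR R) (measurableTypeR R) R
    lebesgue_measure (fun t => t + T) in _).
suff -> : lebesgue_measure A = mu A by [].
apply: lebesgue_measure_unique => // _ [[a b] _ <-] /=.
rewrite /pushforward.
have -> : (fun t => t + T) @^-1` `]a, b] = `]a - T, b - T].
  by apply/seteqP; split => t /=; rewrite !in_itv /= => /andP[? ?];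
    apply/andP; split; lra.
rewrite !lebesgue_measure_itv /= !lte_fin ltrD2r.
by case: ifP => // _; rewrite -EFinB; congr EFin; ring.
Unshelve. exact: measurable_fun_addr.
Qed.

Local Open Scope ereal_scope.

Lemma integral_addr T f : measurable_fun setT f ->
  \int[lebesgue_measure]_t (f (t + T))%:E = \int[lebesgue_measure]_t (f t)%:E.
Proof.
move=> mf; have mT := measurable_fun_addr T.
transitivity (\int[@pushforward _ _ (measurableTypeR R) (measurableTypeR R) R
    lebesgue_measure (fun t => (t + T)%R)]_t (f t)%:E); last first.
  apply: (eq_measure_integral lebesgue_measure); last first.
    by move=> A mA _; exact: (lebesgue_measure_addr T A mA).
rewrite integralE [RHS]integralE.
rewrite (ge0_integral_pushforward mT) //; last first.
  by apply: measurable_funepos; apply/measurable_EFinP.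
rewrite (ge0_integral_pushforward mT) //; last first.
  by apply: measurable_funeneg; apply/measurable_EFinP.
by rewrite preimage_setT -funepos_comp -funeneg_comp.
Qed.

Local Close Scope ereal_scope.

Lemma Rintegral_addr T f : measurable_fun setT f ->
  Rintegral lebesgue_measure setT (fun t => f (t + T))
  = Rintegral lebesgue_measure setT f.
Proof. by move=> mf; rewrite /Rintegral integral_addr. Qed.

Lemma integrable_addr T f : lebesgue_measure.-integrable setT (EFin \o f) ->
  lebesgue_measure.-integrable setT (EFin \o (fun t => f (t + T))).
Proof.
have absE g : (fun t => `|(EFin \o g) t|%E) = (fun t => `|g t|%:E).
  by apply/funext => t; exact: abse_EFin.
move=> /integrableP[/measurable_EFinP mf]; rewrite absE => fint.
apply/integrableP; split.
  by apply/measurable_EFinP; apply: measurableT_comp => //; exact: measurable_fun_addr.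
rewrite absE (integral_addr T (fun t => `|f t|)) //.
exact: measurableT_comp.
Qed.

Lemma continuous_compact_support_integrable f (M : R) : continuous f ->
  (forall t, M < `|t| -> f t = 0) -> lebesgue_measure.-integrable setT (EFin \o f).
Proof.
move=> cf f0.
have mI : measurable (`[-M, M] : set (measurableTypeR R)) by exact: measurable_itv.
have intI : lebesgue_measure.-integrable `[-M, M] (EFin \o f).
  apply: continuous_compact_integrable; first exact: segment_compact.
  exact: continuous_subspaceT.
suff -> : EFin \o f = (EFin \o f) \_ `[-M, M].
  exact: (integrable_mkcond _ mI).1 intI.
apply/funext => t; rewrite /patch; case: ifPn => // /negP.
by rewrite inE /= in_itv /= -ler_norml => /negP; rewrite -ltNge => /f0 ->.
Qed.

End translation_invariance.

Local Open Scope complex_scope.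

Section complex_integral.
Context {R : realType}.
Implicit Types (g : R -> R[i]) (T : R).

Definition cintegrable g :=
  lebesgue_measure.-integrable setT (EFin \o (fun t => complex.Re (g t))) /\
  lebesgue_measure.-integrable setT (EFin \o (fun t => complex.Im (g t))).

Lemma continuous_compact_support_cintegrable g (M : R) :
  continuous (fun t => complex.Re (g t)) -> continuous (fun t => complex.Im (g t)) ->
  (forall t, M < `|t| -> g t = 0) -> cintegrable g.
Proof.
move=> cRe cIm g0; split.
- by apply: (continuous_compact_support_integrable _ M cRe) => t /g0 ->.
- by apply: (continuous_compact_support_integrable _ M cIm) => t /g0 ->.
Qed.

Lemma cint_addr g T : cintegrable g -> cint (fun t => g (t + T)) = cint g.
Proof.
case=> /(measurable_int _)/measurable_EFinP mRe /(measurable_int _)/measurable_EFinP mIm.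
by rewrite /cint (Rintegral_addr T _ mRe) (Rintegral_addr T _ mIm).
Qed.

Lemma cintegrable_addr g T : cintegrable g -> cintegrable (fun t => g (t + T)).
Proof.
by case=> iRe iIm; split; [exact: (integrable_addr T _ iRe) | exact: (integrable_addr T _ iIm)].
Qed.

Lemma cint_mulr g (K : R[i]) : cintegrable g -> cint (fun t => g t * K) = cint g * K.
Proof.
case: K => a b [iRe iIm]; rewrite /cint.
have -> : (fun t => complex.Re (g t * Complex a b)) =
    (fun t => complex.Re (g t) * a - complex.Im (g t) * b).
  by apply/funext => t; case: (g t).
have -> : (fun t => complex.Im (g t * Complex a b)) =
    (fun t => complex.Re (g t) * b + complex.Im (g t) * a).
  by apply/funext => t; case: (g t).
have iM (h : R -> R) k : lebesgue_measure.-integrable setT (EFin \o h) ->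
    lebesgue_measure.-integrable setT (EFin \o (fun t => h t * k)).
  exact: integrableZr.
by rewrite RintegralB ?RintegralD ?RintegralZr //; exact: iM.
Qed.

End complex_integral.

Section fourier_symbols.
Context {R : realType}.

Lemma cexpD (a b : R[i]) : cexp (a + b) = cexp a * cexp b.
Proof.
case: a => a1 a2; case: b => b1 b2; rewrite /cexp /= expRD cosD sinD.
by apply/eqP; rewrite eq_complex /=; apply/andP; split; apply/eqP; ring.
Qed.

Lemma cexpNi (x : R) : cexp (- 'i * x%:C) = Complex (cos x) (- sin x).
Proof.
rewrite /cexp /= !(mul0r, mulN1r, mulr0, oppr0, subr0, add0r) expR0 !mul1r.
by rewrite cosN sinN.
Qed.

Lemma test_fun_continuous (psi : R -> R[i]) : test_fun psi ->
  continuous (fun t => complex.Re (psi t)) /\ continuous (fun t => complex.Im (psi t)).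
Proof.
have smooth_continuous f : smoothR f -> continuous f.
  by move=> sf t; apply/differentiable_continuous/derivable1_diffP; exact: (sf 0%N t).
by case=> sRe [sIm _]; split; exact: smooth_continuous.
Qed.

Lemma test_fun_modulated_cintegrable (psi : R -> R[i]) (w : R) : test_fun psi ->
  cintegrable (fun t => psi t * cexp (- 'i * (w * t)%:C)).
Proof.
move=> tpsi; have [cRe cIm] := test_fun_continuous _ tpsi.
case: tpsi => _ [_ [M psi0]].
have cw : continuous (fun t : R => w * t).
  by move=> t; apply: cvgM; [exact: cvg_cst | exact: cvg_id].
have ccos : continuous (fun t => cos (w * t)).
  by move=> t; exact: continuous_comp (cw t) (@continuous_cos R _).
have csin : continuous (fun t => sin (w * t)).
  by move=> t; exact: continuous_comp (cw t) (@continuous_sin R _).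
have ReE : (fun t => complex.Re (psi t * cexp (- 'i * (w * t)%:C))) =
    (fun t => complex.Re (psi t) * cos (w * t) + complex.Im (psi t) * sin (w * t)).
  by apply/funext => t; rewrite cexpNi; case: (psi t) => a b /=; ring.
have ImE : (fun t => complex.Im (psi t * cexp (- 'i * (w * t)%:C))) =
    (fun t => complex.Im (psi t) * cos (w * t) - complex.Re (psi t) * sin (w * t)).
  by apply/funext => t; rewrite cexpNi; case: (psi t) => a b /=; ring.
apply: (continuous_compact_support_cintegrable _ M).
- rewrite [X in continuous X]ReE => t.
  by apply: cvgD; apply: cvgM; [exact: cRe | exact: ccos | exact: cIm | exact: csin].
- rewrite [X in continuous X]ImE => t.
  by apply: cvgB; apply: cvgM; [exact: cIm | exact: ccos | exact: cRe | exact: csin].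
- by move=> t /psi0 ->; rewrite mul0r.
Qed.

Lemma invFT_addr (psi : R -> R[i]) (T w : R) : test_fun psi ->
  invFT (fun t => psi (t + T)) w = cexp ('i * (w * T)%:C) * invFT psi w.
Proof.
move=> tpsi; rewrite /invFT.
set g := fun t => psi t * cexp (- 'i * (w * t)%:C).
have gi : cintegrable g by exact: test_fun_modulated_cintegrable.
have -> : (fun t => psi (t + T) * cexp (- 'i * (w * t)%:C)) =
    (fun t => g (t + T) * cexp ('i * (w * T)%:C)).
  apply/funext => t; rewrite /g -mulrA -cexpD; congr (_ * cexp _).
  by rewrite !rmorphM rmorphD /=; ring.
rewrite cint_mulr; last exact: cintegrable_addr.
by rewrite cint_addr //; ring.
Qed.

Lemma Ghat_alpha_tv_delay (c0 tau1 alpha2 : R) (x : 'rV[R]_3) (w : R) :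
  Ghat (alpha_tv c0 tau1) c0 x w * cexp ('i * (w * T1 c0 alpha2 x)%:C)
  = Ghat (alpha_ksb c0 tau1 alpha2) c0 x w.
Proof.
rewrite /Ghat /T1 /c1 invrK mulrAC -[_ * _ * cexp _]mulrA -cexpD.
congr (_ * cexp _ / _); rewrite /wavenum /alpha_tv /alpha_ksb.
rewrite !rmorphM rmorphD /= !fmorphV /=.
apply/eqP; rewrite -subr_eq0; apply/eqP.
transitivity (('i ^+ 2 + 1) * ('i * w%:C * (enorm3 x)%:C * (c0%:C^-1 + alpha2%:C))).
  by ring.
by rewrite sqr_i addNr mul0r.
Qed.

End fourier_symbols.

Theorem lemma2p2 (R : realType) (c0 tau1 alpha2 : R) :
  0 < c0 -> 0 < tau1 -> 0 <= alpha2 ->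
  forall x : 'rV[R]_3, x != 0 ->
  forall psi : R -> R[i], test_fun psi ->
    translate (T1 c0 alpha2 x) (green (alpha_tv c0 tau1) c0 x) psi
    = green (alpha_ksb c0 tau1 alpha2) c0 x psi.
Proof.
(* The integrands agree pointwise in [w] for all parameters. *)
move=> _ _ _ x _ psi tpsi; rewrite /translate /green.
congr cint; apply/funext => w.
by rewrite invFT_addr // mulrA Ghat_alpha_tv_delay.
Qed.
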